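(* Let $\mathcal A$ be a Von Neumann algebra in $\mathcal L(\mathcal H)$ and $U:\mathcal H\to\bigoplus_i(\mathcal H_L^i\otimes\mathcal H_R^i)$ a representation unitary for $\mathcal A$. Then the map $\chi_U:\mathcal H\to(\bigoplus_i\mathcal H_L^i)\otimes(\bigoplus_i\mathcal H_R^i)$, $x\mapsto Ux$ (followed by the natural inclusion $\bigoplus_i(\mathcal H_L^i\otimes\mathcal H_R^i)\hookrightarrow(\bigoplus_i\mathcal H_L^i)\otimes(\bigoplus_i\mathcal H_R^i)$), is a splitting map such that $\mathrm{stloc}_L(\chi_U)=\mathrm{loc}_L(\chi_U)=\mathcal A$ and $\mathrm{stloc}_R(\chi_U)=\mathrm{loc}_R(\chi_U)=\mathcal A'$.
   Context: All Hilbert spaces are finite-dimensional and complex. A Von Neumann algebra in $\mathcal L(\mathcal H)$ is a $*$-subalgebra closed under adjoint containing $\mathbb 1_{\mathcal H}$; $\mathcal A'$ is its commutant in $\mathcal L(\mathcal H)$. A representation unitary for $\mathcal A$ is a unitary $U:\mathcal H\to\bigoplus_i(\mathcal H_L^i\otimes\mathcal H_R^i)$ with $U\mathcal AU^\dagger=\bigoplus_i\mathcal L(\mathcal H_L^i)\otimes\mathbb 1_{\mathcal H_R^i}$. A splitting map on $\mathcal H$ is an isometry $\chi:\mathcal H\to\mathcal H_L^\chi\otimes\mathcal H_R^\chi$. $A\in\mathcal L(\mathcal H)$ is left $\chi$-local if $A=\chi^\dagger(\tilde A\otimes\mathbb 1)\chi$ for some $\tilde A\in\mathcal L(\mathcal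 H_L^\chi)$, and strictly left $\chi$-local if there is $\tilde A\in\mathcal L(\mathcal H_L^\chi)$ with $A\chi^\dagger=\chi^\dagger(\tilde A\otimes\mathbb 1)$ and $\chi A=(\tilde A\otimes\mathbb 1)\chi$; the sets are $\mathrm{loc}_L(\chi)$, $\mathrm{stloc}_L(\chi)$. The right versions $\mathrm{loc}_R(\chi)$, $\mathrm{stloc}_R(\chi)$ are defined in the same way with $\mathbb 1\otimes\tilde A$ for $\tilde A\in\mathcal L(\mathcal H_R^\chi)$. *)

(* Finite-dimensional complex Hilbert spaces are modelled as
   C^n (column vectors) with the standard inner product, over an arbitrary
   numClosedFieldType C (e.g. complex numbers); operators are 'M[C]_n. *)
From HB Require Import structures.
From mathcomp Require Import all_boot all_order all_algebra.
From mathcomp Require Import mxtens.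
Set Implicit Arguments. Unset Strict Implicit. Unset Printing Implicit Defensive.
Import Order.TTheory GRing.Theory Num.Theory.
Local Open Scope ring_scope.

Definition adj {C : numClosedFieldType} {m n : nat} (M : 'M[C]_(m, n)) : 'M[C]_(n, m) :=
  map_mx Num.conj (M^T).

Definition vN_algebra {C : numClosedFieldType} {n : nat} (A : 'M[C]_n -> Prop) : Prop :=
  [/\ A 1%:M,
      (forall a b, A a -> A b -> A (a + b)),
      (forall (c : C) a, A a -> A (c *: a)),
      (forall a b, A a -> A b -> A (a *m b))
    & (forall a, A a -> A (adj a))].

Definition commutant {C : numClosedFieldType} {n : nat} (A : 'M[C]_n -> Prop) : 'M[C]_n -> Prop :=
  fun b => forall a, A a -> a *m b = b *m a.

Definition unitary {C : numClosedFieldType} {m n : nat} (U : 'M[C]_(m, n)) : Prop :=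
  U *m adj U = 1%:M /\ adj U *m U = 1%:M.

Definition representation_unitary {C : numClosedFieldType} {n k : nat}
  (dL dR : 'I_k -> nat) (A : 'M[C]_n -> Prop)
  (U : 'M[C]_(\sum_(i < k) (dL i * dR i), n)) : Prop :=
  unitary U /\
  forall M : 'M[C]_(\sum_(i < k) (dL i * dR i)),
    (exists a, A a /\ M = U *m a *m adj U) <->
    (exists X : forall i : 'I_k, 'M[C]_(dL i),
        M = \mxdiag_(i < k) (X i *t (1%:M : 'M[C]_(dR i)))).

Definition splitting_map {C : numClosedFieldType} {dl dr n : nat}
  (chi : 'M[C]_(dl * dr, n)) : Prop := adj chi *m chi = 1%:M.

Definition locL {C : numClosedFieldType} {dl dr n : nat}
  (chi : 'M[C]_(dl * dr, n)) (a : 'M[C]_n) : Prop :=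
  exists At : 'M[C]_dl, a = adj chi *m (At *t (1%:M : 'M[C]_dr)) *m chi.

Definition stlocL {C : numClosedFieldType} {dl dr n : nat}
  (chi : 'M[C]_(dl * dr, n)) (a : 'M[C]_n) : Prop :=
  exists At : 'M[C]_dl,
    a *m adj chi = adj chi *m (At *t (1%:M : 'M[C]_dr)) /\
    chi *m a = (At *t (1%:M : 'M[C]_dr)) *m chi.

Definition locR {C : numClosedFieldType} {dl dr n : nat}
  (chi : 'M[C]_(dl * dr, n)) (a : 'M[C]_n) : Prop :=
  exists At : 'M[C]_dr, a = adj chi *m ((1%:M : 'M[C]_dl) *t At) *m chi.

Definition stlocR {C : numClosedFieldType} {dl dr n : nat}
  (chi : 'M[C]_(dl * dr, n)) (a : 'M[C]_n) : Prop :=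
  exists At : 'M[C]_dr,
    a *m adj chi = adj chi *m ((1%:M : 'M[C]_dl) *t At) /\
    chi *m a = ((1%:M : 'M[C]_dl) *t At) *m chi.

(* Natural inclusion \bigoplus_i (H_L^i (x) H_R^i) -> (\bigoplus_i H_L^i) (x) (\bigoplus_i H_R^i):
   the i-th block is  embL_i (x) embR_i,  where embL_i : H_L^i -> \bigoplus_j H_L^j is the
   canonical injection (i-th column block of the identity). *)
Definition sum_incl {C : numClosedFieldType} {k : nat} (dL dR : 'I_k -> nat) :
  'M[C]_((\sum_(i < k) dL i) * (\sum_(i < k) dR i), \sum_(i < k) (dL i * dR i)) :=
  \mxrow_(i < k)
    (submxrow (1%:M : 'M[C]_(\sum_(j < k) dL j)) i *t
     submxrow (1%:M : 'M[C]_(\sum_(j < k) dR j)) i).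

Definition chiU {C : numClosedFieldType} {n k : nat} (dL dR : 'I_k -> nat)
  (U : 'M[C]_(\sum_(i < k) (dL i * dR i), n)) :
  'M[C]_((\sum_(i < k) dL i) * (\sum_(i < k) dR i), n) :=
  sum_incl dL dR *m U.

Arguments representation_unitary {C n k} dL dR A U.
Arguments sum_incl {C k} dL dR.
Arguments chiU {C n k} dL dR U.

From HB Require Import structures.
From mathcomp Require Import all_boot all_order all_algebra.
From mathcomp Require Import mxtens.
Set Implicit Arguments. Unset Strict Implicit. Unset Printing Implicit Defensive.
Import Order.TTheory GRing.Theory Num.Theory.
Local Open Scope ring_scope.

(* Write S for the inclusion of \bigoplus_i (H_L^i (x) H_R^i) into
   (\bigoplus_i H_L^i) (x) (\bigoplus_i H_R^i), so that chi_U = S U.  The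
   compression S^* (X (x) Y) S is the block matrix with blocks X_ij (x) Y_ij;
   hence S is an isometry, and compressing X (x) 1 (resp. 1 (x) Y) gives the
   block-diagonal operator \bigoplus_i X_ii (x) 1 (resp. \bigoplus_i 1 (x) Y_ii).
   Conjugating by U, the left-local operators are U^* (\bigoplus_i L(H_L^i) (x) 1) U
   = A, and the right-local ones are U^* (\bigoplus_i 1 (x) L(H_R^i)) U, which is A'
   because the commutant of \bigoplus_i L(H_L^i) (x) 1 is \bigoplus_i 1 (x) L(H_R^i)
   (computed blockwise with matrix units and a partial trace).  Strict locality
   comes from S intertwining \bigoplus_i X_i (x) 1 with (\bigoplus_i X_i) (x) 1,
   and for any isometry strict locality implies locality. *)

Section Conjugation.
Variables (R : pzRingType) (m n : nat) (V : 'M[R]_(m, n)) (W : 'M[R]_(n, m)).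
Hypothesis WV : W *m V = 1%:M.

Lemma conjK (a : 'M[R]_n) : W *m (V *m a *m W) *m V = a.
Proof. by rewrite !mulmxA WV mul1mx -mulmxA WV mulmx1. Qed.

Lemma conj_mul (a b : 'M[R]_n) :
  V *m a *m W *m (V *m b *m W) = V *m (a *m b) *m W.
Proof. by rewrite !mulmxA -[V *m a *m W *m V]mulmxA WV mulmx1. Qed.

Lemma mulmx_conj (a : 'M[R]_n) : V *m a = V *m a *m W *m V.
Proof. by rewrite -mulmxA WV mulmx1. Qed.

End Conjugation.

Section Adjoint.
Variable C : numClosedFieldType.

Lemma adj_mul m n p (A : 'M[C]_(m, n)) (B : 'M[C]_(n, p)) :
  adj (A *m B) = adj B *m adj A.
Proof. by rewrite /adj trmx_mul map_mxM. Qed.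

Lemma adj1mx n : adj (1%:M : 'M[C]_n) = 1%:M.
Proof. by rewrite /adj trmx1 map_scalar_mx rmorph1. Qed.

Lemma adjK m n (A : 'M[C]_(m, n)) : adj (adj A) = A.
Proof. by apply/matrixP => i j; rewrite !mxE conjCK. Qed.

Lemma adj_tens m n p q (A : 'M[C]_(m, n)) (B : 'M[C]_(p, q)) :
  adj (A *t B) = adj A *t adj B.
Proof. by rewrite /adj trmx_tens map_mxT. Qed.

Lemma adj_mxrow k (p_ : 'I_k -> nat) m (B_ : forall i, 'M[C]_(m, p_ i)) :
  adj (\mxrow_i B_ i) = \mxcol_i adj (B_ i).
Proof. by apply/matrixP => a b; rewrite !mxE. Qed.

Lemma conj_adj m n (V : 'M[C]_(m, n)) (a : 'M[C]_n) D :
  V *m a *m adj V = D -> V *m adj a *m adj V = adj D.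
Proof. by move <-; rewrite !adj_mul adjK mulmxA. Qed.

End Adjoint.

Section SplittingMap.
Variables (C : numClosedFieldType) (dl dr n : nat) (chi : 'M[C]_(dl * dr, n)).

Lemma intertwine_stloc (a : 'M[C]_n) M :
  chi *m a = M *m chi -> chi *m adj a = adj M *m chi ->
  a *m adj chi = adj chi *m M /\ chi *m a = M *m chi.
Proof. by move=> chiM /(congr1 adj); rewrite !adj_mul !adjK. Qed.

Hypothesis chi_iso : splitting_map chi.

Lemma isometry_compress (a : 'M[C]_n) M :
  a *m adj chi = adj chi *m M -> a = adj chi *m M *m chi.
Proof. by move <-; rewrite -mulmxA chi_iso mulmx1. Qed.

Lemma stlocL_locL a : stlocL chi a -> locL chi a.
Proof. by move=> [At [aAt _]]; exists At; apply: isometry_compress. Qed.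

Lemma stlocR_locR a : stlocR chi a -> locR chi a.
Proof. by move=> [At [aAt _]]; exists At; apply: isometry_compress. Qed.

End SplittingMap.

Section TensorCommutant.
Variables (C : numClosedFieldType) (p q : nat).
Local Notation idx := (@mxtens_index p q).

Lemma tensmx11 : (1%:M : 'M[C]_p) *t (1%:M : 'M[C]_q) = 1%:M.
Proof.
apply/matrixP => x y.
case: (mxtens_indexP x) => i1 i2; case: (mxtens_indexP y) => j1 j2.
by rewrite tensmxE !mxE -natrM mulnb (can_eq (@mxtens_indexK p q)) xpair_eqE.
Qed.

Lemma delta_tens1_mulE r s (N : 'M[C]_(p * q)) i1 i2 y :
  ((delta_mx r s *t (1%:M : 'M[C]_q)) *m N) (idx (i1, i2)) y =
  (i1 == r)%:R * N (idx (s, i2)) y.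
Proof.
rewrite mxE (bigD1 (idx (s, i2))) //= big1 => [|z]; last first.
  case: (mxtens_indexP z) => a b.
  rewrite (can_eq (@mxtens_indexK p q)) xpair_eqE negb_and tensmxE !mxE.
  by case/orP => /negbTE; rewrite 1?eq_sym => ->; rewrite ?andbF !(mul0r, mulr0).
by rewrite tensmxE !mxE !eqxx andbT mulr1 addr0.
Qed.

Lemma mul_delta_tens1E r s (N : 'M[C]_(p * q)) x j1 j2 :
  (N *m (delta_mx r s *t (1%:M : 'M[C]_q))) x (idx (j1, j2)) =
  N x (idx (r, j2)) * (s == j1)%:R.
Proof.
transitivity (((delta_mx s r *t (1%:M : 'M[C]_q)) *m N^T) (idx (j1, j2)) x).
  by rewrite -[delta_mx s r]trmx_delta -[in RHS]trmx1 -trmx_tens -trmx_mul [RHS]mxE.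
by rewrite delta_tens1_mulE mxE mulrC eq_sym.
Qed.

Definition ptrace1 (N : 'M[C]_(p * q)) : 'M[C]_q :=
  \matrix_(a, b) \sum_r N (idx (r, a)) (idx (r, b)).

Lemma tens1_commutant (N : 'M[C]_(p * q)) :
  (forall Z : 'M[C]_p,
     (Z *t (1%:M : 'M[C]_q)) *m N = N *m (Z *t (1%:M : 'M[C]_q))) ->
  N = (1%:M : 'M[C]_p) *t (p%:R^-1 *: ptrace1 N).
Proof.
move=> NZ.
have NE r s i1 i2 j1 j2 :
    (i1 == r)%:R * N (idx (s, i2)) (idx (j1, j2)) =
    N (idx (i1, i2)) (idx (r, j2)) * (s == j1)%:R.
  by rewrite -delta_tens1_mulE NZ mul_delta_tens1E.
apply/matrixP => x y.
case: (mxtens_indexP x) => i1 i2; case: (mxtens_indexP y) => j1 j2.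
rewrite tensmxE !mxE.
have [<-|ne] := eqVneq i1 j1; last first.
  have := NE i1 i1 i1 i2 j1 j2; rewrite eqxx (negbTE ne) mul1r mulr0 => ->.
  by rewrite mul0r.
have Nrr r : N (idx (r, i2)) (idx (r, j2)) = N (idx (i1, i2)) (idx (i1, j2)).
  by have := NE i1 r i1 i2 r j2; rewrite !eqxx mul1r mulr1.
have p_gt0 : (0 < p)%N by apply: leq_ltn_trans (ltn_ord i1).
rewrite mul1r (eq_bigr _ (fun r _ => Nrr r)) sumr_const card_ord.
by rewrite -[X in _ * X]mulr_natl mulKf // pnatr_eq0 -lt0n.
Qed.

End TensorCommutant.

Section BlockDiagonal.
Variables (C : numClosedFieldType) (k : nat) (p_ : 'I_k -> nat).
Local Notation sp := (\sum_(i < k) p_ i)%N.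
Local Notation e_ i := (submxrow (1%:M : 'M[C]_sp) i).

Lemma submxblock_mxdiag_neq (B_ : forall i, 'M[C]_(p_ i)) i j :
  i != j -> submxblock (\mxdiag_i B_ i) i j = 0.
Proof. by move=> /negbTE ne; rewrite mxblockK ne. Qed.

Lemma submxblock1 i : submxblock (1%:M : 'M[C]_sp) i i = 1%:M.
Proof. by rewrite -mxdiagZ submxblock_diag. Qed.

Lemma submxblock1_neq i j : i != j -> submxblock (1%:M : 'M[C]_sp) i j = 0.
Proof. by rewrite -mxdiagZ; apply: submxblock_mxdiag_neq. Qed.

Lemma mxblock_diag (B_ : forall i j, 'M[C]_(p_ i, p_ j)) :
  (forall i j, i != j -> B_ i j = 0) ->
  \mxblock_(i, j) B_ i j = \mxdiag_i B_ i i.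
Proof.
move=> B0; apply/mxblockP => i j; rewrite mxblockK.
have [<-|ne] := eqVneq i j; first by rewrite submxblock_diag.
by rewrite submxblock_mxdiag_neq // B0.
Qed.

Lemma mul_mxdiag (A_ B_ : forall i, 'M[C]_(p_ i)) :
  \mxdiag_i A_ i *m \mxdiag_i B_ i = \mxdiag_i (A_ i *m B_ i).
Proof.
rewrite {2}/mxdiag mul_mxdiag_mxblock; apply/mxblockP => i j.
rewrite mxblockK; have [<-|ne] := eqVneq i j.
  by rewrite submxblock_diag conform_mx_id.
by rewrite submxblock_mxdiag_neq // mulmx0.
Qed.

Lemma adj_mxdiag (B_ : forall i, 'M[C]_(p_ i)) :
  adj (\mxdiag_i B_ i) = \mxdiag_i adj (B_ i).
Proof.
apply/mxblockP => i j.
have -> : submxblock (adj (\mxdiag_i B_ i)) i j =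
          adj (submxblock (\mxdiag_i B_ i) j i).
  by apply/matrixP => a b; rewrite !mxE.
have [<-|ne] := eqVneq i j; first by rewrite !submxblock_diag.
rewrite !submxblock_mxdiag_neq // 1?eq_sym //.
by apply/matrixP => a b; rewrite !mxE rmorph0.
Qed.

Lemma submxblock_mxdiag_mull (D_ : forall i, 'M[C]_(p_ i)) (M : 'M[C]_sp) i j :
  submxblock (\mxdiag_i D_ i *m M) i j = D_ i *m submxblock M i j.
Proof. by rewrite -{1}[M]submxblockK mul_mxdiag_mxblock mxblockK. Qed.

Lemma submxblock_mxdiag_mulr (D_ : forall i, 'M[C]_(p_ i)) (M : 'M[C]_sp) i j :
  submxblock (M *m \mxdiag_i D_ i) i j = submxblock M i j *m D_ j.
Proof. by rewrite -{1}[M]submxblockK mul_mxblock_mxdiag mxblockK. Qed.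

Lemma submxblock_compress (M : 'M[C]_sp) i j :
  adj (e_ i) *m M *m e_ j = submxblock M i j.
Proof.
have -> : adj (e_ i) = submxcol 1%:M i.
  by apply/matrixP => a b; rewrite !mxE rmorph_nat eq_sym.
by rewrite submxcol_mul mul1mx mul_submxrow mulmx1 submxblockEv.
Qed.

Lemma mul_mxdiag_submxrow1 (X_ : forall i, 'M[C]_(p_ i)) j :
  \mxdiag_i X_ i *m e_ j = e_ j *m X_ j.
Proof.
rewrite mul_submxrow mulmx1; apply/mxcolP => i.
rewrite -submxcol_mul -!submxblockEh.
have [<-|ne] := eqVneq i j; first by rewrite submxblock_diag submxblock1 mul1mx.
by rewrite submxblock_mxdiag_neq // submxblock1_neq // mul0mx.
Qed.

End BlockDiagonal.

Section TensorBlocks.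
Variables (C : numClosedFieldType) (k : nat) (dL dR : 'I_k -> nat).
Local Notation sLR := (\sum_(i < k) (dL i * dR i))%N.
Local Notation diagL X := (\mxdiag_i (X i *t (1%:M : 'M[C]_(dR i)))).
Local Notation diagR Y := (\mxdiag_i ((1%:M : 'M[C]_(dL i)) *t Y i)).

Lemma mxdiag_tens_commute (X : forall i, 'M[C]_(dL i)) (Y : forall i, 'M[C]_(dR i)) :
  diagL X *m diagR Y = diagR Y *m diagL X.
Proof.
by rewrite !mul_mxdiag; apply: eq_mxdiag => i; rewrite !tensmx_mul !mul1mx !mulmx1.
Qed.

Lemma mxdiag_tens1_commutant (M : 'M[C]_sLR) :
  (forall X, diagL X *m M = M *m diagL X) ->
  M = diagR (fun i => (dL i)%:R^-1 *: ptrace1 (submxblock M i i)).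
Proof.
move=> MX.
have Mij X i j : (X i *t (1%:M : 'M_(dR i))) *m submxblock M i j =
                 submxblock M i j *m (X j *t (1%:M : 'M_(dR j))).
  pose D l := X l *t (1%:M : 'M[C]_(dR l)).
  by rewrite -(submxblock_mxdiag_mull D) -(submxblock_mxdiag_mulr D) MX.
apply/mxblockP => i j.
have [<-|ne] := eqVneq i j.
  rewrite submxblock_diag; apply: tens1_commutant => Z.
  by have := Mij (fun l => conform_mx (0 : 'M[C]_(dL l)) Z) i i; rewrite conform_mx_id.
rewrite submxblock_mxdiag_neq //.
have := Mij (fun l => if l == i then 1%:M else 0) i j.
by rewrite eqxx eq_sym (negbTE ne) tensmx11 tens0mx mul1mx mulmx0.
Qed.

End TensorBlocks.

Section SumInclusion.
Variables (C : numClosedFieldType) (k : nat) (dL dR : 'I_k -> nat).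
Local Notation sL := (\sum_(i < k) dL i)%N.
Local Notation sR := (\sum_(i < k) dR i)%N.
Local Notation S := (@sum_incl C k dL dR).

Lemma sum_incl_compress (X : 'M[C]_sL) (Y : 'M[C]_sR) :
  adj S *m (X *t Y) *m S = \mxblock_(i, j) (submxblock X i j *t submxblock Y i j).
Proof.
rewrite /sum_incl adj_mxrow mxcol_mul mul_mxcol_mxrow; apply: eq_mxblock => i j.
by rewrite adj_tens !tensmx_mul !submxblock_compress.
Qed.

Lemma sum_incl_compressL (X : 'M[C]_sL) :
  adj S *m (X *t 1%:M) *m S = \mxdiag_i (submxblock X i i *t 1%:M).
Proof.
rewrite sum_incl_compress mxblock_diag => [|i j ne]; last first.
  by rewrite submxblock1_neq // tensmx0.
by apply: eq_mxdiag => i; rewrite submxblock1.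
Qed.

Lemma sum_incl_compressR (Y : 'M[C]_sR) :
  adj S *m (1%:M *t Y) *m S = \mxdiag_i (1%:M *t submxblock Y i i).
Proof.
rewrite sum_incl_compress mxblock_diag => [|i j ne]; last first.
  by rewrite submxblock1_neq // tens0mx.
by apply: eq_mxdiag => i; rewrite submxblock1.
Qed.

Lemma sum_incl_isometry : adj S *m S = 1%:M.
Proof.
rewrite -[S in _ *m S]mul1mx -tensmx11 mulmxA sum_incl_compressL.
rewrite -[RHS](mxdiagZ (p_ := fun i => (dL i * dR i)%N)).
by apply: eq_mxdiag => i; rewrite submxblock1 tensmx11.
Qed.

Lemma sum_incl_mxdiagL (X : forall i, 'M[C]_(dL i)) :
  (\mxdiag_i X i *t 1%:M) *m S = S *m \mxdiag_i (X i *t 1%:M).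
Proof.
rewrite /sum_incl mul_mxrow mul_mxrow_mxdiag; apply: eq_mxrow => i.
by rewrite !tensmx_mul mul_mxdiag_submxrow1 mul1mx mulmx1.
Qed.

Lemma sum_incl_mxdiagR (Y : forall i, 'M[C]_(dR i)) :
  (1%:M *t \mxdiag_i Y i) *m S = S *m \mxdiag_i (1%:M *t Y i).
Proof.
rewrite /sum_incl mul_mxrow mul_mxrow_mxdiag; apply: eq_mxrow => i.
by rewrite !tensmx_mul mul_mxdiag_submxrow1 mul1mx mulmx1.
Qed.

End SumInclusion.

Section RepresentationUnitary.
Variables (C : numClosedFieldType) (n k : nat) (dL dR : 'I_k -> nat).
Variables (A : 'M[C]_n -> Prop) (U : 'M[C]_(\sum_(i < k) (dL i * dR i), n)).
Hypothesis repU : representation_unitary dL dR A U.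
Local Notation S := (sum_incl dL dR).
Local Notation chi := (chiU dL dR U).
Local Notation diagL X := (\mxdiag_i (X i *t (1%:M : 'M[C]_(dR i)))).
Local Notation diagR Y := (\mxdiag_i ((1%:M : 'M[C]_(dL i)) *t Y i)).

Let UU' : U *m adj U = 1%:M. Proof. by case: repU => -[]. Qed.
Let U'U : adj U *m U = 1%:M. Proof. by case: repU => -[]. Qed.

Lemma rep_conj a : A a -> exists X, U *m a *m adj U = diagL X.
Proof. by move=> Aa; apply/(repU.2 _).1; exists a. Qed.

Lemma rep_mxdiagL X : exists2 b, A b & diagL X = U *m b *m adj U.
Proof. by have [b []] := (repU.2 (diagL X)).2 (ex_intro _ X erefl); exists b. Qed.

Lemma chiU_isometry : splitting_map chi.
Proof.
rewrite /splitting_map /chiU adj_mul mulmxA -[adj U *m _ *m _]mulmxA.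
by rewrite sum_incl_isometry mulmx1.
Qed.

Lemma chiU_compress M : adj chi *m M *m chi = adj U *m (adj S *m M *m S) *m U.
Proof. by rewrite /chiU adj_mul !mulmxA. Qed.

Lemma chiU_mulmx a D M :
  U *m a *m adj U = D -> M *m S = S *m D -> chi *m a = M *m chi.
Proof. by move=> aD MS; rewrite /chiU -mulmxA (mulmx_conj U'U) aD !mulmxA MS. Qed.

Lemma locL_chiU a : locL chi a -> A a.
Proof.
move=> [X ->]; rewrite chiU_compress sum_incl_compressL.
by have [b Ab ->] := rep_mxdiagL (fun i => submxblock X i i); rewrite conjK.
Qed.

Lemma locR_chiU a : locR chi a -> commutant A a.
Proof.
move=> [Y ->] b /rep_conj [X bX].
rewrite chiU_compress sum_incl_compressR -(conjK U'U b) bX !(conj_mul UU').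
by rewrite mxdiag_tens_commute.
Qed.

Lemma stlocL_chiU_mxdiag a X : U *m a *m adj U = diagL X -> stlocL chi a.
Proof.
move=> aX; exists (\mxdiag_i X i); apply: intertwine_stloc.
  by apply: chiU_mulmx aX _; rewrite sum_incl_mxdiagL.
apply: chiU_mulmx (conj_adj aX) _.
rewrite adj_tens adj1mx adj_mxdiag sum_incl_mxdiagL adj_mxdiag.
by congr (_ *m _); apply: eq_mxdiag => i; rewrite adj_tens adj1mx.
Qed.

Lemma stlocR_chiU_mxdiag a Y : U *m a *m adj U = diagR Y -> stlocR chi a.
Proof.
move=> aY; exists (\mxdiag_i Y i); apply: intertwine_stloc.
  by apply: chiU_mulmx aY _; rewrite sum_incl_mxdiagR.
apply: chiU_mulmx (conj_adj aY) _.
rewrite adj_tens adj1mx adj_mxdiag sum_incl_mxdiagR adj_mxdiag.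
by congr (_ *m _); apply: eq_mxdiag => i; rewrite adj_tens adj1mx.
Qed.

Lemma stlocL_chiU a : A a -> stlocL chi a.
Proof. by move=> /rep_conj [X]; apply: stlocL_chiU_mxdiag. Qed.

Lemma stlocR_chiU a : commutant A a -> stlocR chi a.
Proof.
move=> ca; apply: (stlocR_chiU_mxdiag (mxdiag_tens1_commutant _)) => X.
by have [b Ab ->] := rep_mxdiagL X; rewrite !(conj_mul U'U) ca.
Qed.

End RepresentationUnitary.

Theorem mainTheorem10 (C : numClosedFieldType) (n k : nat)
  (dL dR : 'I_k -> nat) (A : 'M[C]_n -> Prop)
  (U : 'M[C]_(\sum_(i < k) (dL i * dR i), n)) :
  vN_algebra A ->
  representation_unitary dL dR A U ->
  splitting_map (chiU dL dR U) /\
  (forall a : 'M[C]_n,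
     (stlocL (chiU dL dR U) a <-> A a) /\ (locL (chiU dL dR U) a <-> A a)) /\
  (forall a : 'M[C]_n,
     (stlocR (chiU dL dR U) a <-> commutant A a) /\
     (locR (chiU dL dR U) a <-> commutant A a)).
Proof.
move=> _ repU; have chi_iso := chiU_isometry repU.
split=> //; split=> a; split; split.
- by move=> /(stlocL_locL chi_iso) /(locL_chiU repU).
- exact: stlocL_chiU.
- exact: locL_chiU.
- by move=> /(stlocL_chiU repU) /(stlocL_locL chi_iso).
- by move=> /(stlocR_locR chi_iso) /(locR_chiU repU).
- exact: stlocR_chiU.
- exact: locR_chiU.
- by move=> /(stlocR_chiU repU) /(stlocR_locR chi_iso).
Qed.
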